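(* Let $P$ be a countable multiset of primes, $G=\bigoplus_{p\in P}\mathbb{F}_p$, let $X$ be an ergodic $G$-system, let $d\geq 0$, and let $q:G\times X\to S^1$ be a phase polynomial of degree $<d$ which is also a cocycle. Then for every $g\in G$, $q(g,\cdot)$ takes values in $C_m$, where $m=n^d$ and $n$ is the order of $g$.
   Context: $C_m$ is the group of $m$-th roots of unity. A $G$-system is a compact metrizable probability space with measure-preserving $G$-action $(T_g)$; ergodic: only constants invariant. $q$ is a phase polynomial of degree $<d$ if for each $g$, $\Delta_{h_1}\cdots\Delta_{h_d}q(g,\cdot)=1$ a.e. for all $h_i\in G$, where $\Delta_h\phi=(\phi\circ T_h)/\phi$. $q$ is a cocycle if $q(g+g',x)=q(g,x)q(g',T_gx)$. *)

From HB Require Import structures.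
From mathcomp Require Import all_boot all_order all_algebra.
From mathcomp Require Import all_classical all_reals all_analysis.
From mathcomp Require complex.
Import complex.ComplexField.
Set Implicit Arguments. Unset Strict Implicit. Unset Printing Implicit Defensive.
Import Order.TTheory GRing.Theory Num.Theory.
Local Open Scope classical_set_scope.
Local Open Scope ring_scope.

(* The group G = (+)_{i in I} F_{p i}, for a countable multiset of primes  *)
(* P = (p i)_{i in I} (I a countable index type, p i prime).               *)
Section DirectSum.
Variables (I : countType) (p : I -> nat).

Definition dsum_pred (g : I -> nat) : Prop :=
  (forall i, (g i < p i)%N) /\ finite_set [set i | g i != 0%N].

Definition dsum : Type := {g : I -> nat | dsum_pred g}.

Definition dsum_val (g : dsum) : I -> nat := proj1_sig g.

Lemma dsum0_proof : (forall i, prime (p i)) -> dsum_pred (fun _ => 0%N).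
Proof.
move=> pr; split=> [i|]; first exact: prime_gt0.
by have -> : [set i : I | 0%N != 0%N] = set0 by apply/seteqP; split.
Qed.

Lemma dsumD_proof (pr : forall i, prime (p i)) (g h : dsum) :
  dsum_pred (fun i => (dsum_val g i + dsum_val h i) %% p i)%N.
Proof.
case: g h => [g [_ fg]] [h [_ fh]] /=; split=> [i|].
  by rewrite ltn_pmod // prime_gt0.
have fU : finite_set ([set i | g i != 0%N] `|` [set i | h i != 0%N]).
  by rewrite finite_setU.
apply: (sub_finite_set _ fU) => i /=.
case: (boolP (g i == 0%N)) => [/eqP -> | ?]; last by left.
case: (boolP (h i == 0%N)) => [/eqP -> | ?]; last by right.
by rewrite mod0n eqxx.
Qed.

End DirectSum.

Section Group.
Variables (I : countType) (p : I -> nat) (pr : forall i, prime (p i)).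

Definition dsum0 : dsum p := exist _ _ (dsum0_proof pr).
Definition dsumD (g h : dsum p) : dsum p := exist _ _ (dsumD_proof pr g h).

End Group.

Definition dsum_order (I : countType) (p : I -> nat) (g : dsum p) (n : nat)
  : Prop :=
  (0 < n)%N /\ (forall i, (n * dsum_val g i) %% p i = 0)%N /\
  (forall k, (0 < k)%N -> (forall i, (k * dsum_val g i) %% p i = 0)%N ->
     (n <= k)%N).

Section System.
Variables (R : realType) (X : pseudoPMetricType R).

Definition borel (X' : pseudoPMetricType R) := g_sigma_algebraType (@open X').

Variables (G : Type) (G0 : G) (Gadd : G -> G -> G).
Variables (mu : probability (borel X) R) (T : G -> borel X -> borel X).

Definition mp_action : Prop :=
  (forall g, measurable_fun setT (T g)) /\
  (forall g (A : set (borel X)), measurable A -> mu (T g @^-1` A) = mu A) /\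
  (forall x, T G0 x = x) /\
  (forall g h x, T (Gadd g h) x = T g (T h x)).

Definition ergodic : Prop :=
  forall f : borel X -> R, measurable_fun setT f ->
    (forall g, {ae mu, forall x, f (T g x) = f x}) ->
    exists c : R, {ae mu, forall x, f x = c}.

Definition mderiv (h : G) (phi : borel X -> complex.complex R)
  : borel X -> complex.complex R :=
  fun x => phi (T h x) / phi x.

Definition mderivs (hs : seq G) (phi : borel X -> complex.complex R) :=
  foldr mderiv phi hs.

Definition circle_valued (q : G -> borel X -> complex.complex R) : Prop :=
  (forall g x, `|q g x| = 1) /\
  (forall g, measurable_fun setT (fun x => complex.Re (q g x))) /\
  (forall g, measurable_fun setT (fun x => complex.Im (q g x))).

Definition phase_poly_lt (d : nat) (q : G -> borel X -> complex.complex R)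
  : Prop :=
  forall g (hs : seq G), size hs = d ->
    {ae mu, forall x, mderivs hs (q g) x = 1}.

Definition cocycle (q : G -> borel X -> complex.complex R) : Prop :=
  forall g g' x, q (Gadd g g') x = q g x * q g' (T g x).

End System.

From HB Require Import structures.
From mathcomp Require Import all_boot all_order all_algebra.
From mathcomp Require Import all_classical all_reals all_analysis.
From mathcomp Require complex.
Import complex.ComplexField.
Import Order.TTheory GRing.Theory Num.Theory.
Local Open Scope classical_set_scope.
Local Open Scope ring_scope.

(* Since n.g = 0, T_g^n is the identity on X.  The cocycle identity gives
   prod_(i<n) q(g, T_g^i x) = q(n.g, x) = q(0, x) = 1, and for j >= 1 the
   product of Delta_g^j q(g, .) along an orbit telescopes to 1.  If
   (Delta_g^(j+1) q(g, .))^N = 1 a.e., then (Delta_g^j q(g, .))^N is constant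
   along almost every orbit, so its n-th power is that orbit product, i.e.
   (Delta_g^j q(g, .))^(N n) = 1 a.e.  Descending from j = d, where
   Delta_g^d q(g, .) = 1 a.e. by the phase polynomial condition, to j = 0
   gives q(g, .)^(n^d) = 1 a.e. *)

Lemma ratio_root_prod_eq1 {F : fieldType} (a : nat -> F) (N n : nat) :
  (forall k, a k != 0) ->
  (forall k, (k < n)%N -> (a k.+1 / a k) ^+ N = 1) ->
  \prod_(k < n) a k = 1 -> a 0%N ^+ (N * n) = 1.
Proof.
move=> a_neq0 ratio1 prod1.
have aN k : (k <= n)%N -> a k ^+ N = a 0%N ^+ N.
  elim: k => [//|k IH] lt_kn.
  rewrite -(IH (ltnW lt_kn)) -(divfK (a_neq0 k) (a k.+1)).
  by rewrite exprMn ratio1 ?mul1r.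
have := congr1 (fun z => z ^+ N) prod1; rewrite expr1n -prodrXl.
rewrite (eq_bigr (fun=> a 0%N ^+ N)) => [|k _]; last by rewrite aN// ltnW.
by rewrite prodr_const card_ord -exprM.
Qed.

Lemma prod_orbit_ratio {F : fieldType} {T : Type} {f : T -> T} {phi : T -> F}
    {n : nat} {x : T} :
  (forall y, phi y != 0) -> iter n f x = x ->
  \prod_(i < n) (phi (iter i.+1 f x) / phi (iter i f x)) = 1.
Proof.
move=> phi_neq0 fnx.
have telescope m : \prod_(i < m) (phi (iter i.+1 f x) / phi (iter i f x))
                   = phi (iter m f x) / phi x.
  elim: m => [|m IH]; first by rewrite big_ord0 divff.
  by rewrite big_ord_recr /= IH mulrC mulrA divfK.
by rewrite telescope fnx divff.
Qed.

Lemma ae_comp {d} {T : measurableType d} {R : realType}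
    {mu : {measure set T -> \bar R}} {f : T -> T} {P : T -> Prop} :
  measurable_fun setT f ->
  (forall A, measurable A -> mu (f @^-1` A) = mu A) ->
  {ae mu, forall x, P x} -> {ae mu, forall x, P (f x)}.
Proof.
move=> mf f_pres [A [mA muA0 notP_A]]; exists (f @^-1` A); split.
- by rewrite -[_ @^-1` _]setTI; apply: mf.
- by rewrite f_pres.
- by move=> x /notP_A.
Qed.

Lemma ae_orbit {d} {T : measurableType d} {R : realType}
    {mu : {measure set T -> \bar R}} {f : T -> T} {P : T -> Prop} :
  measurable_fun setT f ->
  (forall A, measurable A -> mu (f @^-1` A) = mu A) ->
  {ae mu, forall x, P x} -> {ae mu, forall x, forall k, P (iter k f x)}.
Proof.
move=> mf f_pres aeP; apply: ae_foralln; elim=> [//|k IH].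
by move: (ae_comp mf f_pres IH); apply: filterS => x; rewrite iterSr.
Qed.

Definition gmuln {G : Type} (G0 : G) (Gadd : G -> G -> G) (g : G) (k : nat)
  : G := iter k (Gadd g) G0.

Section CocycleAlongOrbits.
Context {R : realType} {X : pseudoPMetricType R}.
Context {G : Type} {G0 : G} {Gadd : G -> G -> G}.
Context {mu : probability (borel X) R} {T : G -> borel X -> borel X}.
Local Notation C := (complex.complex R : fieldType).
Context {q : G -> borel X -> C}.
Hypotheses (hT : mp_action G0 Gadd mu T) (Gadd00 : Gadd G0 G0 = G0).
Hypotheses (q_neq0 : forall h x, q h x != 0) (hcoc : cocycle Gadd T q).

Lemma action_muln g k x : T (gmuln G0 Gadd g k) x = iter k (T g) x.
Proof.
case: hT => _ [_ [T0 TD]].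
by elim: k x => [|k IH] x; rewrite /= ?T0 // TD IH.
Qed.

Lemma cocycle0 x : q G0 x = 1.
Proof.
case: hT => _ [_ [T0 _]].
have := hcoc G0 G0 x; rewrite Gadd00 T0 -{1}[q G0 x]mulr1.
by move=> /(mulfI (q_neq0 G0 x)).
Qed.

Lemma cocycle_muln g k x :
  q (gmuln G0 Gadd g k) x = \prod_(i < k) q g (iter i (T g) x).
Proof.
elim: k x => [|k IH] x; first by rewrite big_ord0 cocycle0.
rewrite /gmuln iterS -/(gmuln G0 Gadd g k) hcoc IH big_ord_recl.
by congr (_ * _); apply: eq_bigr => i _; rewrite -iterSr.
Qed.

Context {g : G} {n : nat}.
Hypothesis gn0 : gmuln G0 Gadd g n = G0.

Lemma orbit_period x : iter n (T g) x = x.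
Proof. by case: hT => _ [_ [T0 _]]; rewrite -action_muln gn0 T0. Qed.

Definition deriv_q (j : nat) : borel X -> C :=
  iter j (mderiv T g) (q g).

Lemma deriv_q_neq0 j x : deriv_q j x != 0.
Proof.
elim: j x => [|j IH] x; first exact: q_neq0.
by rewrite /deriv_q iterS -/(deriv_q j) /mderiv mulf_neq0 ?invr_eq0.
Qed.

Lemma prod_orbit_deriv_q j x : \prod_(i < n) deriv_q j (iter i (T g) x) = 1.
Proof.
case: j => [|j]; first by rewrite -cocycle_muln gn0 cocycle0.
rewrite -[RHS](prod_orbit_ratio (deriv_q_neq0 j) (orbit_period x)).
by apply: eq_bigr => i _; rewrite /deriv_q iterS.
Qed.

Lemma deriv_q_root j N :
  {ae mu, forall x, deriv_q j.+1 x ^+ N = 1} ->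
  {ae mu, forall x, deriv_q j x ^+ (N * n) = 1}.
Proof.
case: hT => mT [Tpres _] /(ae_orbit (mT g) (Tpres g)).
apply: filterS => x orbit_root.
apply: (@ratio_root_prod_eq1 _ (fun k => deriv_q j (iter k (T g) x))).
- by move=> k; apply: deriv_q_neq0.
- by move=> k _; rewrite -(orbit_root k) /deriv_q iterS.
- exact: prod_orbit_deriv_q.
Qed.

Lemma deriv_q_root_iter k j N :
  {ae mu, forall x, deriv_q (k + j) x ^+ N = 1} ->
  {ae mu, forall x, deriv_q j x ^+ (N * n ^ k) = 1}.
Proof.
elim: k j => [|k IH] j; first by rewrite muln1.
by rewrite addSnnS expnSr mulnA => /IH; apply: deriv_q_root.
Qed.

Theorem phase_poly_cocycle_root d :
  phase_poly_lt mu T d q -> {ae mu, forall x, q g x ^+ (n ^ d)%N = 1}.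
Proof.
move=> /(_ g (nseq d g) (size_nseq _ _)) aeD.
rewrite -[(n ^ d)%N]mul1n -[q g]/(deriv_q 0); apply: deriv_q_root_iter.
move: aeD; apply: filterS => x; rewrite addn0 expr1.
suff -> : mderivs T (nseq d g) (q g) = deriv_q d by [].
by rewrite /deriv_q; elim: (d) => //= k ->.
Qed.

End CocycleAlongOrbits.

Section DirectSumMultiples.
Context {I : countType} {p : I -> nat} (pr : forall i, prime (p i)).

Lemma dsumD00 : dsumD pr (dsum0 pr) (dsum0 pr) = dsum0 pr.
Proof. by apply: eq_exist; apply: funext => i /=; rewrite addn0 mod0n. Qed.

Lemma dsum_val_muln (g : dsum p) k i :
  dsum_val (gmuln (dsum0 pr) (dsumD pr) g k) i = (k * dsum_val g i %% p i)%N.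
Proof.
elim: k => [|k IH]; first by rewrite mul0n mod0n.
by rewrite /gmuln iterS /= -/(gmuln _ _ g k) IH modnDmr mulSn.
Qed.

Lemma dsum_muln_order {g : dsum p} {n : nat} :
  dsum_order g n -> gmuln (dsum0 pr) (dsumD pr) g n = dsum0 pr.
Proof.
move=> [_ [ng0 _]]; case E: gmuln => [v pv].
apply: eq_exist; apply: funext => i.
by have := dsum_val_muln g n i; rewrite E ng0.
Qed.

End DirectSumMultiples.

Theorem propositionB1
  (I : countType) (p : I -> nat) (pr : forall i, prime (p i))
  (R : realType) (X : pseudoPMetricType R)
  (hX : hausdorff_space X) (cX : compact [set: X])
  (mu : probability (borel X) R) (T : dsum p -> borel X -> borel X)
  (hT : mp_action (dsum0 pr) (dsumD pr) mu T)
  (herg : ergodic mu T)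
  (d : nat) (q : dsum p -> borel X -> complex.complex R)
  (hq : circle_valued q)
  (hpp : phase_poly_lt mu T d q)
  (hcoc : cocycle (dsumD pr) T q) :
  forall (g : dsum p) (n : nat), dsum_order g n ->
    {ae mu, forall x, q g x ^+ (n ^ d)%N = 1}.
Proof.
move=> g n gn.
have q_neq0 h x : (q h x : complex.complex R : fieldType) != 0.
  by case: hq => q_norm _; rewrite -normr_eq0 q_norm oner_eq0.
exact (phase_poly_cocycle_root hT (dsumD00 pr) q_neq0 hcoc
  (dsum_muln_order pr gn) d hpp).
Qed.
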